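(* For probability measures $\mu$ on $\mathbb R$ with finite first moment set $a(x,\mu)=x\,I_{\{x\ge0\}}$ (the indicator function of $\{x\ge0\}$ times $x$), $b(x,\mu)=\int_{\mathbb R}(2y-x)\,\mu(dy)$, and $L_\mu u=a(x,\mu)u''+b(x,\mu)u'$. (a) For every compactly supported probability measure $\mu$, with $W(x,\mu)=\frac12\int_{\mathbb R}(x-2y)^2\,\mu(dy)$, one has $$\int_{\mathbb R}L_\mu W(x,\mu)\,\mu(dx)\le\frac12-\frac12\int_{\mathbb R}x^2\,\mu(dx),$$ where $L_\mu$ acts on $x\mapsto W(x,\mu)$. (b) There is no function $V\in C^2(\mathbb R)$ with $V\ge0$ and $V(x)\to+\infty$ as $|x|\to\infty$, together with positive numbers $C,\Lambda$, such that $\int_{\mathbb R}L_\mu V\,d\mu\le C-\Lambda\int_{\mathbb R}V\,d\mu$ for every compactly supported probability measure $\mu$ on $\mathbb R$. *)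

From HB Require Import structures.
From mathcomp Require Import all_boot all_order all_algebra.
From mathcomp Require Import all_classical all_reals all_analysis.
Set Implicit Arguments. Unset Strict Implicit. Unset Printing Implicit Defensive.
Import Order.TTheory GRing.Theory Num.Theory.
Import numFieldNormedType.Exports.
Local Open Scope classical_set_scope.
Local Open Scope ring_scope.

Definition compactly_supported (R : realType) (mu : probability R R) : Prop :=
  exists M : R, mu [set x : R | M < `|x|] = 0%E.

Definition coef_a (R : realType) (x : R) : R := if 0 <= x then x else 0.

Definition coef_b (R : realType) (x : R) (mu : probability R R) : R :=
  fine (\int[mu]_y ((2 * y - x)%R)%:E).

Definition Lop (R : realType) (mu : probability R R) (u : R -> R) (x : R) : R :=
  coef_a x * derive1 (derive1 u) x + coef_b x mu * derive1 u x.

Definition Wfun (R : realType) (mu : probability R R) (x : R) : R :=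
  2^-1 * fine (\int[mu]_y (((x - 2 * y) ^+ 2)%R)%:E).

Definition C2 (R : realType) (V : R -> R) : Prop :=
  (forall x, derivable V x 1) /\ (forall x, derivable (derive1 V) x 1) /\
  continuous (derive1 (derive1 V)).

Definition coercive (R : realType) (V : R -> R) : Prop :=
  forall A : R, exists N : R, forall x : R, N < `|x| -> A < V x.

(* For compactly supported mu the drift coefficient is affine, b(x) = 2 m1 - x,
   and W(., mu) is the quadratic x^2/2 - 2 m1 x + 2 m2, so that
   L W = a - (x - 2 m1)^2; integrating and using a(x) <= (1 + x^2)/2 gives (a).
   For (b), coercivity and the mean value theorem give c < 0 with V(c) > C/Lam
   and V'(c) < 0.  Against the Dirac mass at c the generator reduces to
   (2c - c) V'(c) = c V'(c) > 0, because the diffusion a vanishes on x < 0,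
   while the right-hand side C - Lam V(c) is negative. *)

From HB Require Import structures.
From mathcomp Require Import all_boot all_order all_algebra.
From mathcomp Require Import all_classical all_reals all_analysis.
From mathcomp Require Import measurable_realfun ring lra.
Import Order.TTheory GRing.Theory Num.Theory.
Import numFieldNormedType.Exports.
Local Open Scope classical_set_scope.
Local Open Scope ring_scope.

Lemma coef_aE (R : realType) : @coef_a R = fun x => 2^-1 * (x + `|x|).
Proof.
apply/funext => x; rewrite /coef_a; case: ifPn => x_ge0.
  by rewrite ger0_norm //; field.
by rewrite ltr0_norm ?ltNge // subrr mulr0.
Qed.

Lemma measurable_coef_a (R : realType) : measurable_fun setT (@coef_a R).
Proof.
rewrite coef_aE; apply: measurable_funM; first exact: measurable_cst.
apply: measurable_funD; first exact: measurable_id.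
exact: normr_measurable.
Qed.

Lemma derivable_measurable {R : realType} (f : R -> R) :
  (forall x, derivable f x 1) -> measurable_fun setT f.
Proof.
move=> df; apply: continuous_measurable_fun => x.
by apply/differentiable_continuous; rewrite -derivable1_diffP.
Qed.

Lemma coef_a_le {R : realType} (x : R) : coef_a x <= 2^-1 + 2^-1 * x ^+ 2.
Proof.
have := sqr_ge0 (x - 1); have := sqr_ge0 x; rewrite /coef_a; case: ifPn => _; lra.
Qed.

Lemma derive1_quadratic (R : realType) (a b c : R) :
  derive1 (fun x : R => a + b * x + c * x ^+ 2) = fun x => b + 2 * c * x.
Proof.
apply/funext => x; rewrite derive1E; apply: derive_val.
have -> : (fun x : R => a + b * x + c * x ^+ 2) = cst a + cst b * id + cst c * id ^+ 2.
  by apply/funext.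
apply: is_derive_eq; rewrite /= /GRing.scale /=.
ring.
Qed.

Lemma measurable_norm_gt (R : realType) (M : R) : measurable [set x : R | M < `|x|].
Proof.
have -> : [set x : R | M < `|x|] = setT `&` (Num.norm @^-1` `]M, +oo[).
  by apply/seteqP; split => x /=; rewrite ?in_itv /= ?andbT; [move=> h; split | case].
exact: normr_measurable.
Qed.

Definition first_moment {R : realType} (mu : probability R R) : R :=
  fine (\int[mu]_y y%:E).

Definition second_moment {R : realType} (mu : probability R R) : R :=
  fine (\int[mu]_y (y ^+ 2)%:E).

Section BoundedSupport.
Context {R : realType} {mu : probability R R} {M : R}.
Hypothesis mu_out : mu [set x | M < `|x|] = 0%E.

Lemma integrable_bounded_on_support (f : R -> R) (K : R) :
  measurable_fun setT f -> (forall x, `|x| <= M -> `|f x| <= K) ->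
  mu.-integrable setT (EFin \o f).
Proof.
move=> mf f_bnd; apply/integrableP; split; first exact/measurable_EFinP.
apply: (@le_lt_trans _ _ (`|K|%:E * mu setT)%E); last first.
  by rewrite probability_setT mule1 ltry.
apply: integral_le_bound => //; first exact/measurable_EFinP.
exists [set x | M < `|x|]; split => //; first exact: measurable_norm_gt.
move=> x /= f_big; rewrite ltNge; apply/negP => xM; apply: f_big => _.
by rewrite lee_fin (le_trans (f_bnd _ xM)) // ler_norm.
Qed.

Lemma integrable_id : mu.-integrable setT EFin.
Proof. by apply: (@integrable_bounded_on_support (fun y => y) M) => //; exact: measurable_id. Qed.

Lemma integrable_sqr : mu.-integrable setT (fun y => (y ^+ 2)%:E).
Proof.
apply: (@integrable_bounded_on_support (fun y => y ^+ 2) (M ^+ 2)) => [|x xM].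
  exact/measurable_funX/measurable_id.
by rewrite normrX lerXn2r // nnegrE (le_trans _ xM).
Qed.

Lemma first_momentE : (first_moment mu)%:E = (\int[mu]_y y%:E)%E.
Proof. by rewrite fineK //; exact: (integrable_fin_num _ integrable_id). Qed.

Lemma second_momentE : (second_moment mu)%:E = (\int[mu]_y (y ^+ 2)%:E)%E.
Proof. by rewrite fineK //; exact: (integrable_fin_num _ integrable_sqr). Qed.

Lemma integral_quadratic (a b c : R) :
  (\int[mu]_y (a + b * y + c * y ^+ 2)%:E =
    (a + b * first_moment mu + c * second_moment mu)%:E)%E.
Proof.
have i1 := integrable_id; have i2 := integrable_sqr.
under eq_integral do rewrite !EFinD [(b * _)%:E]EFinM [(c * _)%:E]EFinM.
rewrite integralD //; last exact: integrableZl.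
  rewrite integralD //; last exact: integrableZl.
    rewrite integralZl // integralZl // -first_momentE -second_momentE integral_cst //.
    by rewrite [X in (a%:E * X)%E]probability_setT mule1 -!EFinM -!EFinD.
  exact: finite_measure_integrable_cst.
apply: integrableD => //; last exact: integrableZl.
exact: finite_measure_integrable_cst.
Qed.

Lemma integrable_quadratic (a b c : R) :
  mu.-integrable setT (EFin \o (fun y => a + b * y + c * y ^+ 2)).
Proof.
have i1 := integrable_id; have i2 := integrable_sqr.
apply: (@eq_integrable _ _ _ mu _ measurableT
  (fun y => a%:E + b%:E * y%:E + c%:E * (y ^+ 2)%:E)%E).
  by move=> y _; rewrite /= -!EFinM -!EFinD.
apply: integrableD => //; last exact: integrableZl.
apply: integrableD => //; last exact: integrableZl.
exact: finite_measure_integrable_cst.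
Qed.

Lemma integrable_coef_a : mu.-integrable setT (EFin \o @coef_a R).
Proof.
apply: (@integrable_bounded_on_support _ `|M| (@measurable_coef_a R)) => x xM.
rewrite /coef_a; case: ifPn => _; last by rewrite normr0.
by rewrite (le_trans xM) // ler_norm.
Qed.

Lemma coef_b_supported (x : R) : coef_b x mu = 2 * first_moment mu - x.
Proof.
rewrite /coef_b (eq_integral (fun y : R => (- x + 2 * y + 0 * y ^+ 2)%:E)).
  by rewrite integral_quadratic /=; ring.
by move=> y _; congr EFin; ring.
Qed.

Lemma Wfun_supported :
  Wfun mu = fun x => 2 * second_moment mu + (- 2 * first_moment mu) * x + 2^-1 * x ^+ 2.
Proof.
apply/funext => x; rewrite /Wfun.
rewrite (eq_integral (fun y : R => (x ^+ 2 + (- 4 * x) * y + 4 * y ^+ 2)%:E)).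
  by rewrite integral_quadratic /=; field.
by move=> y _; congr EFin; ring.
Qed.

Lemma Lop_Wfun_supported (x : R) :
  Lop mu (Wfun mu) x = coef_a x - (x - 2 * first_moment mu) ^+ 2.
Proof.
have W' : derive1 (Wfun mu) = fun x => - 2 * first_moment mu + 1 * x + 0 * x ^+ 2.
  by rewrite Wfun_supported derive1_quadratic; apply/funext => y; field.
rewrite /Lop W' derive1_quadratic coef_b_supported; ring.
Qed.

End BoundedSupport.

Lemma integral_Lop_Wfun_le (R : realType) (mu : probability R R) :
  compactly_supported mu ->
  (\int[mu]_x (Lop mu (Wfun mu) x)%:E
     <= (2^-1)%:E - (2^-1)%:E * \int[mu]_x ((x ^+ 2)%R)%:E)%E.
Proof.
case=> M mu_out; set m1 := first_moment mu.
have LW_le x : Lop mu (Wfun mu) x <= (2^-1 - 4 * m1 ^+ 2) + 4 * m1 * x + (- 2^-1) * x ^+ 2.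
  by rewrite (Lop_Wfun_supported mu_out) -/m1; have := coef_a_le x; lra.
have LW_int : mu.-integrable setT (fun x => (Lop mu (Wfun mu) x)%:E).
  apply: (@eq_integrable _ _ _ mu _ measurableT
    (fun x => (coef_a x)%:E + (- 4 * m1 ^+ 2 + 4 * m1 * x + (- 1) * x ^+ 2)%:E)%E).
    by move=> x _; rewrite (Lop_Wfun_supported mu_out) -/m1 -EFinD; congr EFin; ring.
  apply: integrableD => //; first exact: integrable_coef_a mu_out.
  exact: (integrable_quadratic mu_out (- 4 * m1 ^+ 2) (4 * m1) (- 1)).
apply: le_trans (le_integral measurableT LW_int (integrable_quadratic mu_out _ _ _) _) _.
  by move=> x _; rewrite lee_fin; exact: LW_le.
rewrite (integral_quadratic mu_out) -(second_momentE mu_out) -EFinM -EFinB lee_fin -/m1.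
lra.
Qed.

Lemma coercive_descent_left {R : realType} (V : R -> R) (A : R) :
  (forall x, derivable V x 1) -> coercive V ->
  exists c, [/\ c < 0, A < V c & derive1 V c < 0].
Proof.
move=> dV coerV; have [N VN] := coerV A.
pose z0 := - (`|N| + 1); have [N' VN'] := coerV (V z0).
pose z1 := - (`|N| + `|N'| + 2).
have N_ge0 := normr_ge0 N; have N'_ge0 := normr_ge0 N'.
have z10 : z1 < z0 by rewrite /z1 /z0; lra.
have V10 : V z0 < V z1.
  by apply: VN'; rewrite normrN ger0_norm; have := ler_norm N'; lra.
have [c] : exists2 c, c \in `]z1, z0[ & V z0 - V z1 = derive1 V c * (z0 - z1).
  apply: MVT => //; last by apply: derivable_within_continuous => x _.
  by move=> x _; rewrite derive1E; apply: derivableP.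
rewrite in_itv /= => /andP[z1c cz0] mvt.
have c0 : c < 0 by rewrite /z0 in cz0; lra.
exists c; split => //.
  by apply: VN; rewrite ltr0_norm //; have := ler_norm N; rewrite /z0 in cz0; lra.
have : derive1 V c * (z0 - z1) < 0 by rewrite -mvt subr_lt0.
by rewrite pmulr_llt0 // subr_gt0.
Qed.

Lemma compactly_supported_dirac {R : realType} (c : R) : compactly_supported \d_c.
Proof.
exists `|c|; change ((@dirac _ R c R) [set x | `|c| < `|x|] = 0%E).
by rewrite diracE memNset //= ltxx.
Qed.

Lemma integral_dirac_EFin {R : realType} (c : R) (f : R -> R) :
  measurable_fun setT f -> (\int[\d_c]_x (f x)%:E = (f c)%:E)%E.
Proof.
by move=> mf; rewrite integral_dirac //; [rewrite diracT mul1e | exact/measurable_EFinP].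
Qed.

Lemma coef_b_dirac {R : realType} (c x : R) : coef_b x \d_c = 2 * c - x.
Proof.
rewrite /coef_b integral_dirac_EFin //.
apply: measurable_funB; last exact: measurable_cst.
by apply: measurable_funM; [exact: measurable_cst | exact: measurable_id].
Qed.

Lemma measurable_Lop_dirac {R : realType} (c : R) (V : R -> R) :
  C2 V -> measurable_fun setT (Lop \d_c V).
Proof.
case=> dV [dV' /continuous_measurable_fun mV''].
rewrite /Lop; under eq_fun do rewrite coef_b_dirac.
apply: measurable_funD; apply: measurable_funM => //.
- exact: measurable_coef_a.
- apply: measurable_funB; [exact: measurable_cst | exact: measurable_id].
- exact: derivable_measurable.
Qed.

Lemma Lop_dirac_at_neg {R : realType} (c : R) (V : R -> R) :
  c < 0 -> Lop \d_c V c = c * derive1 V c.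
Proof.
by move=> c0; rewrite /Lop coef_b_dirac /coef_a leNgt c0 mul0r add0r; congr (_ * _); ring.
Qed.

Lemma no_Lyapunov_function (R : realType) :
  ~ (exists (V : R -> R) (C Lam : R),
       [/\ C2 V, (forall x, 0 <= V x), coercive V, 0 < C /\ 0 < Lam &
        forall mu : probability R R, compactly_supported mu ->
          (\int[mu]_x (Lop mu V x)%:E
             <= C%:E - Lam%:E * \int[mu]_x (V x)%:E)%E]).
Proof.
case=> V [C [Lam [V_C2 _ coerV [_ Lam0] drift]]].
have [c [c0 VcA dVc]] := coercive_descent_left V (C / Lam) V_C2.1 coerV.
have := drift \d_c (compactly_supported_dirac c).
rewrite !integral_dirac_EFin; last 2 first.
- exact: derivable_measurable V_C2.1.
- exact: measurable_Lop_dirac.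
rewrite Lop_dirac_at_neg // -EFinM -EFinB lee_fin.
have : C < V c * Lam by rewrite -ltr_pdivrMr.
have : 0 < c * derive1 V c by rewrite nmulr_rgt0.
lra.
Qed.

Theorem mainTheorem12 (R : realType) :
  (forall mu : probability R R, compactly_supported mu ->
     (\int[mu]_x (Lop mu (Wfun mu) x)%:E
        <= (2^-1)%:E - (2^-1)%:E * \int[mu]_x ((x ^+ 2)%R)%:E)%E)
  /\
  ~ (exists (V : R -> R) (C Lam : R),
       [/\ C2 V, (forall x, 0 <= V x), coercive V, 0 < C /\ 0 < Lam &
        forall mu : probability R R, compactly_supported mu ->
          (\int[mu]_x (Lop mu V x)%:E
             <= C%:E - Lam%:E * \int[mu]_x (V x)%:E)%E]).
Proof.
split; [exact: integral_Lop_Wfun_le | exact: no_Lyapunov_function].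
Qed.
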